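(* Let $d,s,t,\ell$ be nonnegative integers with $s\ge 1$, $d \geq 3t-5$ and $t \geq \max\{4, \ell+3\}$, and let $\theta_{t,\ell}\in\Theta_{t,\ell}$. For any three edges of $W_d(s)$, the number of subgraphs of $W_d(s)$ isomorphic to $\theta_{t,\ell}$ that contain at least two of these three edges and contain exactly one hub vertex of $W_d(s)$ is at most \[ N= \begin{cases} \max\{s(t-2),\, t-1\}, & \text{if } \mathbf{X}(\theta_{t,\ell}) \text{ is symmetric},\\ \max\{2s(t-2),\, 2(t-1)\}, & \text{if } \mathbf{X}(\theta_{t,\ell}) \text{ is asymmetric}. \end{cases} \]
   Context: For $d \ge 3$ and $s \ge 1$, the $s$-hubbed wheel $W_d(s) = \overline{K_s} + C_d$ has vertex set $\{u_1,\dots,u_s\} \cup \{v_1,\dots,v_d\}$, where $v_1v_2\cdots v_dv_1$ is a cycle, the hub vertices $u_1,\dots,u_s$ are pairwise non-adjacent, and every $u_a$ is adjacent to every $v_i$. Edges $u_av_i$ are spokes; edges $v_iv_{i+1}$ (indices mod $d$) are rim edges. For $t\ge 3$ and $0 \le \ell \le t-3$, $\Theta_{t,\ell}$ is the class of graphs $\theta_{t,\ell}$ obtained from a cycle $v_1v_2\cdots v_tv_1$ by adding exactly $\ell$ chords $v_1v_{i_1},\dots,v_1v_{i_\ell}$ with $2<i_1<\cdots<i_\ell<t$. Its vector is $\mathbf{X}(\theta_{t,\ell}) = (2, i_1, \dots, i_\ell, t)$. The graph (or its vector) is symmetric if $\ell = 0$ or $i_j + i_{\ell+1-j} = t+2$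 for every $j \le (\ell+1)/2$, and asymmetric otherwise. *)

From mathcomp Require Import all_boot.
Set Implicit Arguments. Unset Strict Implicit. Unset Printing Implicit Defensive.

(* Vertices of the s-hubbed wheel W_d(s): inl a = hub u_{a+1}, inr i = rim v_{i+1}. *)
Definition wheel_vertex (s d : nat) : finType := ('I_s + 'I_d)%type.

Definition is_hub (s d : nat) (x : wheel_vertex s d) : bool :=
  if x is inl _ then true else false.

Definition wheel_adj (s d : nat) : rel (wheel_vertex s d) :=
  fun x y =>
    match x, y with
    | inl _, inr _ => true
    | inr _, inl _ => true
    | inr i, inr j => (i.+1 %% d == j) || (j.+1 %% d == i)
    | inl _, inl _ => false
    end.

Definition is_edge (T : finType) (adj : rel T) (e : {set T}) : bool :=
  [exists x, exists y, (x != y) && adj x y && (e == [set x; y])].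

(* theta_{t,l}: vertex k : 'I_t stands for v_{k+1}; chords is the sorted list
   (i_1,...,i_l) of (1-indexed) chord endpoints, chords being v_1 v_{i_j}. *)
Definition theta_adj (t : nat) (chords : seq nat) : rel 'I_t :=
  fun a b =>
    [|| (a.+1 %% t == b), (b.+1 %% t == a),
        (val a == 0) && (b.+1 \in chords) | (val b == 0) && (a.+1 \in chords)].

Definition theta_chords (t l : nat) (chords : seq nat) : Prop :=
  size chords = l /\ sorted ltn chords /\ all (fun i => (2 < i) && (i < t)) chords.

(* Symmetry of X(theta) = (2, i_1, ..., i_l, t): l = 0 or
   i_j + i_{l+1-j} = t + 2 for every 1 <= j <= (l+1)/2 (i_j 1-indexed,
   i_j = nth 0 chords (j-1); below j.+1 ranges over 1..(l+1)/2). *)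
Definition theta_symmetric (t l : nat) (chords : seq nat) : bool :=
  (l == 0) ||
  [forall j : 'I_((l.+1)./2),
     nth 0 chords j + nth 0 chords (l.+1 - j.+1).-1 == t + 2].

Definition is_subgraph (T : finType) (adj : rel T) (U : {set T}) (F : {set {set T}}) : bool :=
  [forall e in F, is_edge adj e && (e \subset U)].

Definition iso_to (T : finType) (t : nat) (tadj : rel 'I_t)
  (U : {set T}) (F : {set {set T}}) : bool :=
  [exists f : {ffun 'I_t -> T},
    [&& injectiveb f, U == f @: [set: 'I_t],
        [forall a, forall b, (a != b) ==> (([set f a; f b] \in F) == tadj a b)] &
        [forall e in F, exists a, exists b, e == [set f a; f b]]]].

(* Mapping theta_{t,l} onto a subgraph with a single hub u, the cycle v_1 ... v_t passes
   through u once and otherwise runs along t - 1 consecutive rim vertices.  If the vertex mapped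
   to u is not v_1, every chord must end at it, since a chord between two rim vertices would join
   vertices at least two steps apart on the rim path; the reflection of theta exchanging v_1 with
   that vertex is then an automorphism.  So each copy is determined by u, its first rim vertex and
   one of two orientations, and both orientations give the same copy when X(theta) is symmetric.
   For a fixed hub, the first rim vertices of the copies containing a given edge form an arc of
   at most t - 1 positions (t - 2 for a rim edge, none for a spoke at another hub).  As
   d >= 3t - 5, at most t - 1 positions lie in two of three such arcs, and at most t - 2 on
   average over any two hubs, which sums to max(s (t - 2), t - 1) over the hubs. *)

From mathcomp Require Import all_boot zify.
Set Implicit Arguments. Unset Strict Implicit.

Ltac lia_ifs :=
  repeat match goal with H : context [if _ then _ else _] |- _ => revert H end;
  repeat (case: ifP); intros; lia.

Lemma modn_lt_double x n : x < n + n -> x %% n = if x < n then x else x - n.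
Proof.
move=> lt_x_2n; case: ifP => [/modn_small //|/negbT]; rewrite -leqNgt => le_n_x.
by rewrite -{1}(subnK le_n_x) modnDr modn_small //; lia.
Qed.

Definition ord_mod n (n_gt0 : 0 < n) x : 'I_n := Ordinal (ltn_pmod x n_gt0).

Definition cdist d i a := (a + d - i) %% d.

Lemma cdistE d i a : i < d -> a < d -> cdist d i a = if i <= a then a - i else a + d - i.
Proof. by move=> ltid ltad; rewrite /cdist modn_lt_double; lia_ifs. Qed.

Lemma cdist_lt d i a : 0 < d -> cdist d i a < d.
Proof. exact: ltn_pmod. Qed.

Lemma cdist_trans d i p q : i < d -> p < d -> q < d ->
  cdist d i q = (cdist d i p + cdist d p q) %% d.
Proof. by move=> *; rewrite !cdistE // modn_lt_double; lia_ifs. Qed.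

Definition arc_to d L a : {set 'I_d} := [set i : 'I_d | cdist d i a <= L].

Lemma card_arc_to d L a : 0 < d -> a < d -> #|arc_to d L a| <= L.+1.
Proof.
move=> d_gt0 ltad.
pose back (k : 'I_L.+1) : 'I_d := Ordinal (ltn_pmod (a + d - k) d_gt0).
rewrite -[L.+1]card_ord -[#|'I_L.+1|]cardsT.
apply: leq_trans (leq_imset_card back _); apply: subset_leq_card.
apply/subsetP => i; rewrite inE => le_iL.
apply/imsetP; exists (Ordinal (le_iL : cdist d i a < L.+1)) => //.
apply: val_inj => /=; move: le_iL; have := ltn_ord i.
by rewrite cdistE // modn_lt_double; lia_ifs.
Qed.

Lemma card_arc_toI d L a b : 0 < d -> a < d -> b < d -> a != b -> L.*2 < d ->
  #|arc_to d L a :&: arc_to d L b| <= L.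
Proof.
move=> d_gt0 ltad ltbd /eqP neq_ab ltLd.
suff /proper_card : arc_to d L a :&: arc_to d L b \proper arc_to d L a.
  by have := card_arc_to L d_gt0 ltad; lia.
apply/properIl/subsetPn.
have [le_abL|lt_L_ab] := leqP (cdist d a b) L; last first.
  by exists (Ordinal ltad); rewrite inE /= -?ltnNge // /cdist addKn modnn.
have lt_d : (a + d - L) %% d < d by rewrite ltn_pmod.
exists (Ordinal lt_d); rewrite !inE /= ?(cdistE lt_d) //;
  move: le_abL; rewrite cdistE // modn_lt_double; lia_ifs.
Qed.

Definition two_of_three T (A1 A2 A3 : {set T}) : {set T} :=
  [set x | 2 <= (x \in A1) + (x \in A2) + (x \in A3)].

Section TwoOfThree.
Variables (T : finType) (A1 A2 A3 : {set T}).

Lemma two_of_three_swap12 : two_of_three A1 A2 A3 = two_of_three A2 A1 A3.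
Proof. by apply/setP => x; rewrite !inE (addnC (_ \in A1)). Qed.

Lemma two_of_three_swap23 : two_of_three A1 A2 A3 = two_of_three A1 A3 A2.
Proof. by apply/setP => x; rewrite !inE addnAC. Qed.

Lemma two_of_three_rot : two_of_three A1 A2 A3 = two_of_three A3 A1 A2.
Proof. by apply/setP => x; rewrite !inE; lia. Qed.

Lemma two_of_three_sub (B : {set T}) : A1 \subset B -> A2 :&: A3 \subset B ->
  two_of_three A1 A2 A3 \subset B.
Proof.
move=> /subsetP sub1 /subsetP sub23; apply/subsetP => x; rewrite inE.
case: (boolP (x \in A1)) => [/sub1 //|_].
by case: (boolP (x \in A2)); case: (boolP (x \in A3)) => //= *;
  apply: sub23; rewrite inE; apply/andP.
Qed.

Lemma two_of_three0 : two_of_three A1 A2 (set0 : {set T}) \subset A1 :&: A2.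
Proof. by apply/subsetP => x; rewrite !inE; case: (x \in A1); case: (x \in A2). Qed.

End TwoOfThree.

(* Measuring positions from [a1], a witness against each of the three inclusions yields
   linear constraints that together force [d <= 3 L]. *)
Lemma arc_to_cover_meet d L a1 a2 a3 : 0 < d -> 3 * L < d -> a1 < d -> a2 < d -> a3 < d ->
  [|| arc_to d L a2 :&: arc_to d L a3 \subset arc_to d L a1,
      arc_to d L a1 :&: arc_to d L a3 \subset arc_to d L a2 |
      arc_to d L a1 :&: arc_to d L a2 \subset arc_to d L a3].
Proof.
move=> d_gt0 ltLd lt1 lt2 lt3.
case: (boolP (_ \subset arc_to d L a1)) => // /subsetPn [i1].
rewrite !inE -ltnNge => /andP [in12 in13] out11.
case: (boolP (_ \subset arc_to d L a2)) => // /subsetPn [i2].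
rewrite !inE -ltnNge => /andP [in21 in23] out22.
case: (boolP (_ \subset arc_to d L a3)) => // /subsetPn [i3].
rewrite !inE -ltnNge => /andP [in31 in32] out33.
move: in12 in13 out11 in21 in23 out22 in31 in32 out33.
have via1 (i : 'I_d) q : q < d -> cdist d i q = (cdist d i a1 + cdist d a1 q) %% d.
  exact: cdist_trans.
rewrite !(via1 _ a2) // !(via1 _ a3) //.
have := cdist_lt i1 a1 d_gt0; have := cdist_lt i2 a1 d_gt0; have := cdist_lt i3 a1 d_gt0.
have := cdist_lt a1 a2 d_gt0; have := cdist_lt a1 a3 d_gt0.
move: (cdist d i1 a1) (cdist d i2 a1) (cdist d i3 a1) (cdist d a1 a2) (cdist d a1 a3).
move=> x1 x2 x3 g2 g3 ? ? ? ? ?; rewrite !modn_lt_double; try by lia.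
lia_ifs.
Qed.

Lemma card_two_of_three_arcs d L a1 a2 a3 (A1 A2 A3 : {set 'I_d}) : 0 < d -> 3 * L < d ->
  a1 < d -> a2 < d -> a3 < d ->
  A1 \subset arc_to d L a1 -> A2 \subset arc_to d L a2 -> A3 \subset arc_to d L a3 ->
  #|two_of_three A1 A2 A3| <= L.+1.
Proof.
move=> d_gt0 ltLd lt1 lt2 lt3 sub1 sub2 sub3.
case/or3P: (arc_to_cover_meet d_gt0 ltLd lt1 lt2 lt3) => cover.
- apply: leq_trans (card_arc_to L d_gt0 lt1); apply/subset_leq_card/two_of_three_sub => //.
  exact: subset_trans (setISS sub2 sub3) cover.
- rewrite two_of_three_swap12; apply: leq_trans (card_arc_to L d_gt0 lt2).
  apply/subset_leq_card/two_of_three_sub => //.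
  exact: subset_trans (setISS sub1 sub3) cover.
- rewrite two_of_three_rot; apply: leq_trans (card_arc_to L d_gt0 lt3).
  apply/subset_leq_card/two_of_three_sub => //.
  exact: subset_trans (setISS sub1 sub2) cover.
Qed.

Lemma succ_mod_inj d x y : x < d -> y < d -> x.+1 %% d = y.+1 %% d -> x = y.
Proof. by move=> ltxd ltyd; rewrite !modn_lt_double; lia_ifs. Qed.

Lemma succ_mod_mod d x : (x %% d).+1 %% d = x.+1 %% d.
Proof. by rewrite -addn1 modnDml addn1. Qed.

Lemma walk_forward d n (g : nat -> nat) : g 1 < d ->
  (forall k, 0 < k -> k.+1 < n -> (g k).+1 %% d = g k.+1) ->
  forall k, 0 < k < n -> g k = (g 1 + k.-1) %% d.
Proof.
move=> lt_g1 step; elim=> [//|[_ _|k IH /andP [_ lt_kn]]]; first by rewrite addn0 modn_small.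
by rewrite -step // IH ?succ_mod_mod ?addnS //; apply/andP; split; lia.
Qed.

Section CyclePath.
Variables (d n : nat) (g : nat -> nat).
Hypothesis g_lt : forall k, g k < d.
Hypothesis g_inj : forall k k', 0 < k < n -> 0 < k' < n -> g k = g k' -> k = k'.
Hypothesis g_adj : forall k, 0 < k -> k.+1 < n ->
  ((g k).+1 %% d == g k.+1) || ((g k.+1).+1 %% d == g k).

(* Reversing direction would revisit a vertex: [g (k + 2) = g k]. *)
Lemma cycle_path_direction :
  (forall k, 0 < k -> k.+1 < n -> (g k).+1 %% d = g k.+1) \/
  (forall k, 0 < k -> k.+1 < n -> (g k.+1).+1 %% d = g k).
Proof.
have no_return k : 0 < k -> k.+2 < n -> g k.+2 <> g k.
  by move=> k_gt0 lt_k2n /g_inj; lia.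
case fwd1: ((g 1).+1 %% d == g 2); [left|right].
  elim=> [//|[_ _ _|k IH _ lt_k2n]]; first exact/eqP.
  case/orP: (g_adj (ltn0Sn k.+1) lt_k2n) => /eqP // bwd; exfalso.
  apply: (no_return k.+1) => //; apply: (succ_mod_inj (g_lt _) (g_lt _)).
  by rewrite bwd IH //; lia.
elim=> [//|[_ _ lt_2n|k IH _ lt_k2n]].
  case/orP: (g_adj (ltn0Sn 0) lt_2n) => /eqP // fwd12.
  by rewrite fwd12 eqxx in fwd1.
case/orP: (g_adj (ltn0Sn k.+1) lt_k2n) => /eqP // fwd; exfalso.
by apply: (no_return k.+1) => //; rewrite -fwd IH //; lia.
Qed.

Lemma cycle_path_arc : exists b i, i < d /\
  forall k, 0 < k < n -> g k = (i + (if b then k.-1 else n.-1 - k)) %% d.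
Proof.
case: cycle_path_direction => [fwd|bwd].
  by exists true, (g 1); split => //; apply: walk_forward.
exists false, (g n.-1); split => // k /andP [k_gt0 lt_kn].
have rev_step j : 0 < j -> j.+1 < n -> (g (n - j)).+1 %% d = g (n - j.+1).
  move=> j_gt0 lt_jn; rewrite -(bwd (n - j.+1)); try lia.
  by rewrite (_ : (n - j.+1).+1 = n - j) //; lia.
have := @walk_forward d n (fun j => g (n - j)) (g_lt _) rev_step (n - k).
by rewrite subKn ?subn1; [move=> -> //; [congr (_ %% _) | apply/andP; split]; lia | lia].
Qed.

End CyclePath.

(* The placements [i] of the rim path at a fixed hub that contain a given edge: a rim edge
   [v_a v_(a+1)] needs [i] within [t - 3] steps before [a], a spoke to [v_a] within [t - 2]
   steps, and a spoke at another hub never fits. *)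
Inductive window := RimWindow of nat | SpokeWindow of nat | NoWindow.

Definition window_set d t (w : window) : {set 'I_d} :=
  match w with
  | RimWindow a => arc_to d (t - 3) a
  | SpokeWindow a => arc_to d (t - 2) a
  | NoWindow => set0
  end.

Definition window_pos w := if w is (RimWindow a | SpokeWindow a) then a else 0.
Definition is_rim_window w : nat := if w is RimWindow _ then 1 else 0.
Definition is_spoke_window w : nat := if w is SpokeWindow _ then 1 else 0.
Definition distinct_rims w1 w2 :=
  if (w1, w2) is (RimWindow a, RimWindow b) then a != b else true.

Definition hub_bound t r h :=
  if r + h <= 1 then 0
  else if h == 0 then (if r == 2 then t - 3 else t - 2)
  else if (r == 1) && (h == 1) then t - 2 else t - 1.

Lemma window_set_sub d t w : window_set d t w \subset arc_to d (t - 2) (window_pos w).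
Proof.
case: w => [a|a|] /=; [apply/subsetP => i; rewrite !inE; lia | exact: subxx | exact: sub0set].
Qed.

Section HubBound.
Variables (d t : nat).
Hypotheses (d_gt0 : 0 < d) (t_ge4 : 4 <= t) (d_ge : 3 * t - 5 <= d).

Lemma card_two_of_three_windows_le w1 w2 w3 :
  window_pos w1 < d -> window_pos w2 < d -> window_pos w3 < d ->
  #|two_of_three (window_set d t w1) (window_set d t w2) (window_set d t w3)| <= t - 1.
Proof.
move=> lt1 lt2 lt3.
have := card_two_of_three_arcs d_gt0 (_ : 3 * (t - 2) < d) lt1 lt2 lt3
  (window_set_sub d t w1) (window_set_sub d t w2) (window_set_sub d t w3); lia.
Qed.

Lemma card_window_meet w1 w2 : window_pos w1 < d -> window_pos w2 < d -> distinct_rims w1 w2 ->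
  #|window_set d t w1 :&: window_set d t w2| <=
  hub_bound t (is_rim_window w1 + is_rim_window w2) (is_spoke_window w1 + is_spoke_window w2).
Proof.
have card_rim_meet a b : a < d -> #|arc_to d (t - 3) a :&: b| <= t - 2.
  move=> lta; apply: leq_trans (subset_leq_card (subsetIl _ _)) _.
  by have := card_arc_to (t - 3) d_gt0 lta; lia.
case: w1 => [a1|a1|] /= lt1; case: w2 => [a2|a2|] /= lt2 r12; rewrite /hub_bound /=;
  rewrite ?setI0 ?set0I ?cards0 //.
- by apply: card_arc_toI => //; lia.
- exact: card_rim_meet.
- by rewrite setIC; apply: card_rim_meet.
- apply: leq_trans (subset_leq_card (subsetIl _ _)) _.
  by have := card_arc_to (t - 2) d_gt0 lt1; lia.
Qed.

Lemma card_two_of_three_windows w1 w2 w3 :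
  window_pos w1 < d -> window_pos w2 < d -> window_pos w3 < d ->
  distinct_rims w1 w2 -> distinct_rims w1 w3 -> distinct_rims w2 w3 ->
  #|two_of_three (window_set d t w1) (window_set d t w2) (window_set d t w3)| <=
  hub_bound t (is_rim_window w1 + is_rim_window w2 + is_rim_window w3)
              (is_spoke_window w1 + is_spoke_window w2 + is_spoke_window w3).
Proof.
have no_third wa wb : window_pos wa < d -> window_pos wb < d -> distinct_rims wa wb ->
    #|two_of_three (window_set d t wa) (window_set d t wb) (window_set d t NoWindow)| <=
    hub_bound t (is_rim_window wa + is_rim_window wb + is_rim_window NoWindow)
      (is_spoke_window wa + is_spoke_window wb + is_spoke_window NoWindow).
  move=> lta ltb rab; rewrite /= !addn0; apply: leq_trans (card_window_meet lta ltb rab).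
  exact/subset_leq_card/two_of_three0.
move=> lt1 lt2 lt3 r12 r13 r23.
case: w3 lt3 r13 r23 => [a3|a3|] lt3 r13 r23; last exact: no_third.
all: case: w2 lt2 r12 r23 => [a2|a2|] lt2 r12 r23;
  last by rewrite two_of_three_swap23; apply: leq_trans (no_third _ _ lt1 lt3 r13) _;
    rewrite /= !addn0.
all: case: w1 lt1 r12 r13 => [a1|a1|] lt1 r12 r13;
  last by rewrite -two_of_three_rot; apply: leq_trans (no_third _ _ lt2 lt3 r23) _;
    rewrite /= !addn0.
1: by have := card_two_of_three_arcs d_gt0 (_ : 3 * (t - 3) < d) lt1 lt2 lt3
     (subxx _) (subxx _) (subxx _); rewrite /hub_bound /=; lia.
all: by apply: leq_trans (card_two_of_three_windows_le lt1 lt2 lt3) _; rewrite /hub_bound.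
Qed.

End HubBound.

Lemma hub_bound_le t r h : hub_bound t r h <= t - 1.
Proof. by rewrite /hub_bound; lia_ifs. Qed.

Lemma hub_bound_pair t r h1 h2 : 3 <= t -> r + h1 + h2 <= 3 ->
  hub_bound t r h1 + hub_bound t r h2 <= 2 * (t - 2).
Proof. by move=> *; rewrite /hub_bound; lia_ifs. Qed.

(* At most one term can exceed [B], and it is compensated by any other term. *)
Lemma sum_le_pairwise s B (f : 'I_s -> nat) : 2 <= s ->
  (forall u v, u != v -> f u + f v <= 2 * B) -> \sum_u f u <= s * B.
Proof.
move=> s_ge2 pair_le.
have [/existsP [u0 gt_u0]|/existsPn small] := boolP [exists u, B < f u]; last first.
  apply: (@leq_trans (\sum_(u : 'I_s) B)); last by rewrite sum_nat_const card_ord.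
  by apply: leq_sum => u _; rewrite leqNgt small.
have [u1 neq_u10] : exists u1 : 'I_s, u1 != u0.
  have [/eqP u0_0|] := boolP (val u0 == 0).
    by exists (Ordinal (s_ge2 : 1 < s)); rewrite -(inj_eq val_inj) /= u0_0.
  by exists (Ordinal (ltnW s_ge2 : 0 < s)); rewrite -(inj_eq val_inj) /= eq_sym.
have rest_le u : u != u0 -> f u <= B by move=> neq; have := pair_le u u0 neq; lia.
rewrite (bigD1 u0) // (bigD1 u1) //= addnA.
apply: (@leq_trans (2 * B + \sum_(i | (i != u0) && (i != u1)) B)).
  rewrite leq_add ?pair_le 1?eq_sym //.
  by apply: leq_sum => i /andP [neq _]; apply: rest_le.
rewrite sum_nat_const.
have -> : #|[pred i | (i != u0) && (i != u1)]| = s - 2.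
  have := cardsC [set u0; u1]; rewrite cards2 (eq_sym u0) neq_u10 card_ord.
  have -> : #|~: [set u0; u1]| = #|[pred i | (i != u0) && (i != u1)]|.
    by apply: eq_card => i; rewrite !inE negb_or.
  lia.
nia.
Qed.

Lemma wheel_adj_sym s d : symmetric (@wheel_adj s d).
Proof. by move=> [x|x] [y|y] //=; rewrite orbC. Qed.

Section Wheel.
Variables (s d t : nat).
Hypothesis d_gt0 : 0 < d.

(* The candidate copies of theta with one hub: [v_1] goes to the hub [u] and the path
   [v_2 ... v_t] runs along the rim from [v_i] forwards ([b = true]) or ends at [v_i]
   running backwards ([b = false]); either way its rim vertices are [v_i ... v_(i+t-2)]. *)
Definition theta_map (u : 'I_s) (i : nat) (b : bool) (k : 'I_t) : wheel_vertex s d :=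
  if (k : nat) == 0 then inl u
  else inr (ord_mod d_gt0 (i + (if b then k.-1 else t.-1 - k))).

Definition hub_path (u : 'I_s) (i : nat) : {set wheel_vertex s d} :=
  [set theta_map u i true k | k : 'I_t].

Lemma mem_hub_path u i x : 2 <= t -> t <= d -> i < d ->
  (x \in hub_path u i) = if x is inr y then cdist d i y <= t - 2 else x == inl u.
Proof.
move=> t_ge2 le_td lt_id; case: x => [v|y].
  apply/imsetP/eqP => [[k _]|->]; first by rewrite /theta_map; case: ifP => // _ [->].
  by exists (Ordinal (ltnW t_ge2)); rewrite // /theta_map eqxx.
apply/imsetP/idP => [[k _]|le_yt].
  rewrite /theta_map; case: ifP => // /negbT/eqP k_neq0 [->]; have lt_kt := ltn_ord k.
  rewrite /= cdistE ?ltn_pmod // modn_lt_double; lia_ifs.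
have lt_kt : (cdist d i y).+1 < t by lia.
exists (Ordinal lt_kt) => //; rewrite /theta_map /=; congr inr; apply: val_inj => /=.
have lt_yd := ltn_ord y; move: le_yt.
by rewrite cdistE // modn_lt_double; lia_ifs.
Qed.

Inductive wheel_edge := RimEdge of 'I_d | SpokeEdge of 'I_s & 'I_d.

Definition edge_set (e : wheel_edge) : {set wheel_vertex s d} :=
  match e with
  | RimEdge a => [set inr a; inr (ord_mod d_gt0 a.+1)]
  | SpokeEdge v a => [set inl v; inr a]
  end.

Lemma wheel_edge_kind (e : {set wheel_vertex s d}) :
  is_edge (@wheel_adj s d) e -> exists k, e = edge_set k.
Proof.
case/existsP => x /existsP [y /andP [/andP [neq_xy adj_xy] /eqP ->]].
case: x y neq_xy adj_xy => [v|a] [w|b] //= _ adj_ab.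
- by exists (SpokeEdge v b).
- by exists (SpokeEdge w a); rewrite setUC.
case/orP: adj_ab => /eqP succ.
  by exists (RimEdge a); congr [set _; inr _]; apply: val_inj.
by exists (RimEdge b); rewrite setUC; congr [set _; inr _]; apply: val_inj.
Qed.

Definition window_at (u : 'I_s) (e : wheel_edge) : window :=
  match e with
  | RimEdge a => RimWindow a
  | SpokeEdge v a => if v == u then SpokeWindow a else NoWindow
  end.

Lemma edge_sub_hub_path u e (i : 'I_d) : 3 <= t -> t < d ->
  (edge_set e \subset hub_path u i) = (i \in window_set d t (window_at u e)).
Proof.
move=> t_ge3 lt_td; have lt_id := ltn_ord i.
case: e => [a|v a] /=; rewrite subUset !sub1set !mem_hub_path //; try lia.
  have lt_ad := ltn_ord a; have lt_a1 : a.+1 %% d < d by rewrite ltn_pmod.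
  rewrite inE /= !cdistE // modn_lt_double; last lia.
  by apply/andP/idP => [[]|]; lia_ifs.
case: (eqVneq v u) => [->|neq_vu]; first by rewrite eqxx inE.
rewrite /= in_set0; apply/negbTE; apply: contra neq_vu => /andP [/eqP [->] _] //.
Qed.

Lemma window_at_pos u e : window_pos (window_at u e) < d.
Proof. by case: e => [a|v a] /=; last case: (v == u); rewrite /= ?ltn_ord. Qed.

Lemma window_at_distinct u e1 e2 :
  edge_set e1 != edge_set e2 -> distinct_rims (window_at u e1) (window_at u e2).
Proof.
case: e1 => [a|v a]; case: e2 => [b|w b] /=; try by move=> _; do 2? case: eqP.
by apply: contra => /eqP /val_inj ->.
Qed.

Lemma window_at_count u u' e : u != u' ->
  is_rim_window (window_at u e) + is_spoke_window (window_at u e)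
  + is_spoke_window (window_at u' e) <= 1.
Proof.
move=> neq_uu'; case: e => [a|v a] //=.
case: (eqVneq v u) => [vu|_]; case: (eqVneq v u') => [vu'|_] //=.
by move: neq_uu'; rewrite -vu -vu' eqxx.
Qed.

Lemma is_rim_window_at u u' e : is_rim_window (window_at u e) = is_rim_window (window_at u' e).
Proof. by case: e => [a|v a] //=; do 2 case: eqP. Qed.

Definition placements (e1 e2 e3 : {set wheel_vertex s d}) (u : 'I_s) : {set 'I_d} :=
  [set i : 'I_d | 2 <= (e1 \subset hub_path u i) + (e2 \subset hub_path u i)
                       + (e3 \subset hub_path u i)].

Lemma sum_card_placements e1 e2 e3 : 4 <= t -> 3 * t - 5 <= d ->
  is_edge (@wheel_adj s d) e1 -> is_edge (@wheel_adj s d) e2 -> is_edge (@wheel_adj s d) e3 ->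
  e1 != e2 -> e1 != e3 -> e2 != e3 ->
  \sum_u #|placements e1 e2 e3 u| <= maxn (s * (t - 2)) (t - 1).
Proof.
move=> t_ge4 d_ge /wheel_edge_kind [k1 ->] /wheel_edge_kind [k2 ->] /wheel_edge_kind [k3 ->].
move=> neq12 neq13 neq23.
pose rims u := is_rim_window (window_at u k1) + is_rim_window (window_at u k2)
  + is_rim_window (window_at u k3).
pose spokes u := is_spoke_window (window_at u k1) + is_spoke_window (window_at u k2)
  + is_spoke_window (window_at u k3).
have card_le u : #|placements (edge_set k1) (edge_set k2) (edge_set k3) u|
    <= hub_bound t (rims u) (spokes u).
  have -> : placements (edge_set k1) (edge_set k2) (edge_set k3) u = two_of_three
      (window_set d t (window_at u k1)) (window_set d t (window_at u k2))
      (window_set d t (window_at u k3)).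
    by apply/setP => i; rewrite !inE !edge_sub_hub_path //; lia.
  by apply: card_two_of_three_windows; rewrite ?window_at_pos ?window_at_distinct.
have [s_le1|s_ge2] := leqP s 1.
  apply: (@leq_trans (\sum_(u : 'I_s) (t - 1))); last by rewrite sum_nat_const card_ord; nia.
  by apply: leq_sum => u _; apply: leq_trans (card_le u) (hub_bound_le _ _ _).
apply: leq_trans (leq_maxl _ _); apply: sum_le_pairwise => // u v neq_uv.
apply: leq_trans (leq_add (card_le u) (card_le v)) _.
have -> : rims v = rims u by rewrite /rims !(is_rim_window_at v u).
apply: hub_bound_pair; first lia.
by have := window_at_count k1 neq_uv; have := window_at_count k2 neq_uv;
  have := window_at_count k3 neq_uv; rewrite /rims /spokes; lia.
Qed.

End Wheel.

Definition edge_image (T : finType) t (tadj : rel 'I_t) (f : 'I_t -> T) : {set {set T}} :=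
  [set e | [exists a, exists b, [&& a != b, tadj a b & e == [set f a; f b]]]].

Lemma eq_set2 (T : finType) (a b x y : T) : [set a; b] = [set x; y] -> x != y ->
  (a = x /\ b = y) \/ (a = y /\ b = x).
Proof.
move=> eq_ab_xy neq_xy.
have ax : a \in [set x; y] by rewrite -eq_ab_xy set21.
have bx : b \in [set x; y] by rewrite -eq_ab_xy set22.
have xa : x \in [set a; b] by rewrite eq_ab_xy set21.
have ya : y \in [set a; b] by rewrite eq_ab_xy set22.
move: ax bx xa ya; rewrite !inE.
case/orP=> /eqP ->; case/orP=> /eqP ->; rewrite ?eqxx ?orbb //=.
- by move=> _ /eqP eq_yx; rewrite eq_yx eqxx in neq_xy.
- by left.
- by right.
- by move=> /eqP eq_xy; rewrite eq_xy eqxx in neq_xy.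
Qed.

Lemma iso_to_edge_image (T : finType) (adj : rel T) t (tadj : rel 'I_t) U F :
  symmetric adj -> is_subgraph adj U F -> iso_to tadj U F ->
  exists f : 'I_t -> T, [/\ injective f, U = f @: setT, F = edge_image tadj f &
    forall a b, a != b -> tadj a b -> adj (f a) (f b)].
Proof.
move=> adj_sym /forallP sub /existsP [f].
case/and4P => /injectiveP f_inj /eqP -> /forallP f_adj /forallP f_onto.
have edgeP e : e \in F -> exists x y, [/\ x != y, adj x y & e = [set x; y]].
  move=> eF; have := sub e; rewrite eF => /andP [/existsP [x /existsP [y edge_xy]] _].
  by case/andP: edge_xy => /andP [neq_xy adj_xy] /eqP ->; exists x, y.
have inF a b : a != b -> ([set f a; f b] \in F) = tadj a b.
  by move=> neq_ab; have /forallP/(_ b) := f_adj a; rewrite neq_ab => /eqP.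
exists f; split => //; last first.
  move=> a b neq_ab tadj_ab.
  have /edgeP [x [y [neq_xy adj_xy /eq_set2]]] : [set f a; f b] \in F by rewrite inF.
  by case=> // -[-> ->]; rewrite // adj_sym.
apply/setP => e; rewrite inE; apply/idP/existsP => [eF|].
  have := f_onto e; rewrite eF => /existsP [a /existsP [b /eqP e_ab]].
  have neq_ab : a != b.
    apply/eqP => eq_ab; have [x [y [neq_xy _ e_xy]]] := edgeP _ eF.
    have : x \in e by rewrite e_xy set21.
    have : y \in e by rewrite e_xy set22.
    rewrite e_ab eq_ab !inE !orbb => /eqP eq_y /eqP eq_x.
    by rewrite eq_x eq_y eqxx in neq_xy.
  by exists a; apply/existsP; exists b; rewrite neq_ab -inF // -e_ab eF e_ab eqxx.
by case=> a /existsP [b /and3P [neq_ab tadj_ab /eqP ->]]; rewrite inF.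
Qed.

Lemma eq_edge_image (T : finType) t (tadj : rel 'I_t) (f g : 'I_t -> T) :
  f =1 g -> edge_image tadj f = edge_image tadj g.
Proof.
move=> eq_fg; apply/setP => e; rewrite !inE.
by under eq_existsb => a do under eq_existsb => b do rewrite !eq_fg.
Qed.

Lemma edge_image_aut (T : finType) t (tadj : rel 'I_t) (f : 'I_t -> T) (phi : 'I_t -> 'I_t) :
  involutive phi -> {mono phi : a b / tadj a b} ->
  edge_image tadj (f \o phi) = edge_image tadj f.
Proof.
move=> phiK phi_mono; have phi_inj := inv_inj phiK.
apply/setP => e; rewrite !inE.
apply/existsP/existsP => -[a /existsP [b /and3P [neq_ab tadj_ab]]].
  move=> e_ab; exists (phi a); apply/existsP; exists (phi b).
  by rewrite phi_mono (inj_eq phi_inj) neq_ab tadj_ab.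
move=> e_ab; exists (phi a); apply/existsP; exists (phi b).
by rewrite phi_mono (inj_eq phi_inj) /= !phiK neq_ab tadj_ab.
Qed.

Lemma imset_surj_comp (aT aT' rT : finType) (f : aT -> rT) (phi : aT' -> aT) :
  (forall a, exists a', phi a' = a) -> [set f (phi a') | a' : aT'] = [set f a | a : aT].
Proof.
move=> phi_onto; apply/setP => x; apply/imsetP/imsetP => [[a' _ ->]|[a _ ->]].
  by exists (phi a').
by have [a' <-] := phi_onto a; exists a'.
Qed.

Section Mirror.
Variables (t : nat) (t_gt0 : 0 < t).

Definition mirror q (a : 'I_t) : 'I_t := ord_mod t_gt0 (q + t - a).

Lemma mirror_val q a : q < t -> mirror q a = (if a <= q then q - a else q + t - a) :> nat.
Proof. by move=> lt_qt; have := ltn_ord a; rewrite /= modn_lt_double; lia_ifs. Qed.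

Lemma mirrorK q : q < t -> involutive (mirror q).
Proof.
by move=> lt_qt a; apply: ord_inj; have := ltn_ord a; rewrite !mirror_val //; lia_ifs.
Qed.

Lemma mirror_succ q a b : q < t -> ((mirror q a).+1 %% t == mirror q b) = (b.+1 %% t == a).
Proof.
move=> lt_qt; have := ltn_ord a; have := ltn_ord b; have := ltn_ord (mirror q a).
rewrite !mirror_val // => *; rewrite !modn_lt_double; try lia.
by apply/eqP/eqP; lia_ifs.
Qed.

Lemma mirror_eq0 q a : q < t -> (mirror q a == 0 :> nat) = (a == q :> nat).
Proof.
by move=> lt_qt; have lt_at := ltn_ord a; rewrite mirror_val //; apply/eqP/eqP; lia_ifs.
Qed.

Definition chord_adj (chords : seq nat) (a b : 'I_t) :=
  ((a == 0 :> nat) && (b.+1 \in chords)) || ((b == 0 :> nat) && (a.+1 \in chords)).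

Lemma theta_adjE chords a b :
  theta_adj chords a b = [|| a.+1 %% t == b, b.+1 %% t == a | chord_adj chords a b].
Proof. by []. Qed.

Lemma theta_adj_mirror chords q : q < t -> {mono mirror q : a b / chord_adj chords a b} ->
  {mono mirror q : a b / theta_adj chords a b}.
Proof. by move=> lt_qt chord_mono a b; rewrite !theta_adjE chord_mono !mirror_succ // orbCA. Qed.

Lemma chord_adj_mirror0 chords : {in chords, forall c, 2 < c < t} ->
  {in chords, forall c, t.+2 - c \in chords} -> {mono mirror 0 : a b / chord_adj chords a b}.
Proof.
move=> chords_range chords_sym.
have mirror0_chord a : ((mirror 0 a).+1 \in chords) = (a.+1 \in chords).
  have lt_at := ltn_ord a; rewrite mirror_val //.
  case: leqP => [a_le0|a_gt0]; first by have -> : (a : nat) = 0 by lia.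
  apply/idP/idP => /chords_sym; first by rewrite (_ : t.+2 - _ = a.+1) //; lia.
  by rewrite (_ : t.+2 - _ = (0 + t - a).+1) //; lia.
by move=> a b; rewrite /chord_adj !mirror_eq0 // !mirror0_chord.
Qed.

Lemma chord_adj_mirror_single chords h : 0 < h < t -> {in chords, forall c, c = h.+1} ->
  {mono mirror h : a b / chord_adj chords a b}.
Proof.
move=> h_range chords_h.
have memE x : (x \in chords) = (x == h.+1) && (h.+1 \in chords).
  by apply/idP/andP => [x_in|[/eqP -> //]]; rewrite -(chords_h x x_in) eqxx x_in.
have mirror_eqh a : ((mirror h a).+1 == h.+1) = (a == 0 :> nat).
  by have lt_at := ltn_ord a; rewrite mirror_val; [apply/eqP/eqP; lia_ifs | lia].
move: (h.+1 \in chords) memE => hchord memE a b.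
have lt_ht : h < t by case/andP: h_range.
rewrite /chord_adj !memE !(mirror_eq0 _ lt_ht) !mirror_eqh !eqSS {memE}.
by case: (_ == 0 :> nat); case: (_ == 0 :> nat); case: (_ == h :> nat); case: (_ == h :> nat);
  case: hchord.
Qed.

End Mirror.

Lemma theta_symmetric_mirror t l chords :
  theta_chords t l chords -> theta_symmetric t l chords ->
  {in chords, forall c, t.+2 - c \in chords}.
Proof.
case=> size_chords _ /orP [/eqP l0 | /forallP sym_pairs] c c_in.
  by move: c_in; rewrite (size0nil (_ : size chords = 0)) // size_chords.
have lt_jl : index c chords < l by rewrite -size_chords index_mem.
set j := index c chords in lt_jl.
have le_l_2half : l <= (l.+1)./2 + (l.+1)./2.
  by have := odd_double_half l.+1; rewrite -addnn; case: (odd _) => /=; lia.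
have pair_sum : nth 0 chords j + nth 0 chords (l.-1 - j) = t + 2.
  have [lt_j_half|ge_j_half] := ltnP j (l.+1)./2.
    have /eqP := sym_pairs (Ordinal lt_j_half).
    by rewrite /= (_ : (l.+1 - j.+1).-1 = l.-1 - j) //; lia.
  have lt_j'_half : l.-1 - j < (l.+1)./2 by lia.
  have /eqP := sym_pairs (Ordinal lt_j'_half).
  by rewrite /= (_ : (l.+1 - (l.-1 - j).+1).-1 = j) 1?addnC; last lia.
have c_eq : c = nth 0 chords j by rewrite nth_index.
have -> : t.+2 - c = nth 0 chords (l.-1 - j) by rewrite c_eq; lia.
by apply: mem_nth; rewrite size_chords; lia.
Qed.

Section ThetaCopies.
Variables (s d t : nat) (chords : seq nat).
Hypotheses (d_gt0 : 0 < d) (t_gt0 : 0 < t).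

Lemma theta_map_flip (u : 'I_s) i b (a : 'I_t) :
  theta_map d_gt0 u i (~~ b) a = theta_map d_gt0 u i b (mirror t_gt0 0 a).
Proof.
have lt_at := ltn_ord a; rewrite /theta_map mirror_val //.
case: ifP => [/eqP a0|/negbT/eqP a_neq0]; first by rewrite a0.
have -> : (if a <= 0 then 0 - a else 0 + t - a) = t - a by lia_ifs.
rewrite (_ : (t - a == 0) = false); last by apply/eqP; lia.
by congr (inr (ord_mod _ _)); case: b => /=; lia.
Qed.

Lemma theta_map_image (u : 'I_s) i b :
  [set theta_map d_gt0 u i b k | k : 'I_t] = hub_path t d_gt0 u i.
Proof.
case: b => //; rewrite /hub_path.
rewrite -(imset_surj_comp (theta_map d_gt0 u i true) (phi := mirror t_gt0 0)).
  by apply: eq_imset => k; exact: (theta_map_flip u i true k).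
by move=> k; exists (mirror t_gt0 0 k); rewrite mirrorK.
Qed.

Lemma theta_map_rim_adj (u : 'I_s) i b (k k' : 'I_t) : t < d -> k != 0 :> nat -> k' != 0 :> nat ->
  wheel_adj (theta_map d_gt0 u i b k) (theta_map d_gt0 u i b k') ->
  k' = k.+1 :> nat \/ k = k'.+1 :> nat.
Proof.
move=> lt_td /negbTE k_neq0 /negbTE k'_neq0; rewrite /theta_map k_neq0 k'_neq0 /=.
have lt_kt := ltn_ord k; have lt_k't := ltn_ord k'.
have shift x y : x.+1 < d -> y < d -> ((i + x) %% d).+1 %% d = (i + y) %% d -> x.+1 = y.
  move=> lt_x1 lt_y; rewrite succ_mod_mod -addnS => /eqP.
  by rewrite eqn_modDl !modn_small // => /eqP.
by case/orP => /eqP /shift; case: b; lia.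
Qed.

Definition rim_index (x : wheel_vertex s d) : nat := if x is inr y then y else 0.

Lemma theta_copy_from_hub (p : 'I_t -> wheel_vertex s d) (u : 'I_s) : injective p ->
  (forall k, is_hub (p k) = (k == 0 :> nat)) -> p (ord_mod t_gt0 0) = inl u ->
  (forall k k' : 'I_t, 0 < k -> k.+1 = k' :> nat -> wheel_adj (p k) (p k')) ->
  exists (i : 'I_d) b, p =1 theta_map d_gt0 u i b.
Proof.
move=> p_inj p_hub p0 p_adj.
pose g n := rim_index (p (ord_mod t_gt0 n)).
have g_lt k : g k < d by rewrite /g; case: (p _) => [v|y] /=; [exact: d_gt0 | exact: ltn_ord].
have p_rim k : k < t -> k != 0 -> p (ord_mod t_gt0 k) = inr (ord_mod d_gt0 (g k)).
  move=> lt_kt k_neq0; rewrite /g; case E: (p _) => [v|y].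
    by have := p_hub (ord_mod t_gt0 k); rewrite E /= modn_small // (negbTE k_neq0).
  by congr inr; apply: val_inj; rewrite /= modn_small.
have g_inj k k' : 0 < k < t -> 0 < k' < t -> g k = g k' -> k = k'.
  move=> /andP [k_gt0 lt_kt] /andP [k'_gt0 lt_k't] eq_g.
  have /p_inj /(congr1 val) : p (ord_mod t_gt0 k) = p (ord_mod t_gt0 k').
    by rewrite !p_rim ?eq_g -?lt0n.
  by rewrite /= !modn_small.
have g_adj k : 0 < k -> k.+1 < t -> ((g k).+1 %% d == g k.+1) || ((g k.+1).+1 %% d == g k).
  move=> k_gt0 lt_k1t; have lt_kt := ltnW lt_k1t.
  have := p_adj (ord_mod t_gt0 k) (ord_mod t_gt0 k.+1).
  rewrite /= (modn_small lt_k1t) (modn_small lt_kt) !p_rim -?lt0n //.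
  by move/(_ k_gt0 erefl); rewrite /= !(modn_small (g_lt _)).
have [b [i [lt_id gE]]] := cycle_path_arc g_lt g_inj g_adj.
exists (Ordinal lt_id), b => k; rewrite /theta_map.
have kE : k = ord_mod t_gt0 k by apply: val_inj; rewrite /= modn_small.
case: eqP => [k0|/eqP k_neq0]; first by rewrite kE k0 p0.
have k_range : 0 < k < t by rewrite lt0n k_neq0 ltn_ord.
rewrite {1}kE p_rim ?(gE _ k_range) //.
by congr (inr _); apply: val_inj; rewrite /= modn_mod.
Qed.

Lemma chords_at_hub (u : 'I_s) i b (h : 'I_t) : t < d -> 0 < h ->
  {in chords, forall c, 2 < c < t} ->
  (forall a a', a != a' -> theta_adj chords a a' -> wheel_adj
    (theta_map d_gt0 u i b (mirror t_gt0 h a)) (theta_map d_gt0 u i b (mirror t_gt0 h a'))) ->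
  {in chords, forall c, c = h.+1}.
Proof.
move=> lt_td h_gt0 chords_range f_adj c c_in; have /andP [c_gt2 lt_ct] := chords_range c c_in.
have lt_ht := ltn_ord h.
pose z := ord_mod t_gt0 0; pose w := ord_mod t_gt0 c.-1.
have zE : z = 0 :> nat by rewrite /= mod0n.
have wE : w = c.-1 :> nat by rewrite /= modn_small //; lia.
have neq_zw : z != w by apply/eqP => /(congr1 (@nat_of_ord t)); rewrite zE wE; lia.
have tadj_zw : theta_adj chords z w.
  by rewrite theta_adjE /chord_adj zE wE eqxx prednK ?c_in ?orbT //; lia.
apply/eqP; apply: contraT => c_neq.
have mz_neq0 : mirror t_gt0 h z != 0 :> nat by rewrite mirror_eq0 // zE eq_sym -lt0n.
have mw_neq0 : mirror t_gt0 h w != 0 :> nat.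
  by rewrite mirror_eq0 // wE; apply/eqP; move/eqP: c_neq; lia.
have := theta_map_rim_adj lt_td mz_neq0 mw_neq0 (f_adj _ _ neq_zw tadj_zw).
by rewrite !mirror_val // zE wE leq0n subn0; move/eqP: c_neq; lia_ifs.
Qed.

Lemma theta_copy_one_hub l U F : t < d -> theta_chords t l chords ->
  is_subgraph (@wheel_adj s d) U F -> iso_to (@theta_adj t chords) U F ->
  #|[set x in U | is_hub x]| == 1 ->
  exists u (i : 'I_d) b,
    U = hub_path t d_gt0 u i /\ F = edge_image (@theta_adj t chords) (theta_map d_gt0 u i b).
Proof.
move=> lt_td [_ [_ /allP chords_range]] sub iso one_hub.
have [f [f_inj U_eq F_eq f_adj]] := iso_to_edge_image (@wheel_adj_sym s d) sub iso.
have [h [u [fh hubE]]] : exists h u, f h = inl u /\ forall a, is_hub (f a) = (a == h).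
  case/cards1P: one_hub => x0 hubs.
  have : x0 \in [set x in U | is_hub x] by rewrite hubs set11.
  rewrite inE U_eq => /andP [/imsetP [h _ x0E] hub_fh]; rewrite x0E in hubs hub_fh.
  have hubE a : is_hub (f a) = (a == h).
    apply/idP/eqP => [hub_fa|-> //]; apply: f_inj; apply/set1P.
    by rewrite -hubs inE U_eq imset_f ?inE.
  by case E: (f h) hub_fh => [u|//] _; exists h, u.
have lt_ht := ltn_ord h; have mirrorhK := mirrorK t_gt0 lt_ht.
have [||||i [b pE]] := @theta_copy_from_hub (f \o mirror t_gt0 h) u.
- exact: inj_comp f_inj (inv_inj mirrorhK).
- move=> k; have := mirror_eq0 t_gt0 (mirror t_gt0 h k) lt_ht.
  by rewrite mirrorhK /= hubE => ->.
- by rewrite /= -fh; congr f; apply: ord_inj; rewrite mirror_val //= mod0n ?leq0n subn0.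
- move=> k k' k_gt0 kk'; apply: f_adj.
    by rewrite (inj_eq (inv_inj mirrorhK)); apply/eqP => /(congr1 (@nat_of_ord t)); lia.
  have lt_k1t : k.+1 < t by rewrite kk' ltn_ord.
  by rewrite theta_adjE (mirror_succ t_gt0 k' k lt_ht) -kk' (modn_small lt_k1t) eqxx orbT.
have fE a : f a = theta_map d_gt0 u i b (mirror t_gt0 h a) by rewrite -pE /= mirrorhK.
exists u, i; rewrite U_eq F_eq (eq_edge_image _ fE) -(theta_map_image u i b).
have -> : f @: setT = [set theta_map d_gt0 u i b k | k : 'I_t].
  apply/setP => x; apply/imsetP/imsetP => -[a _ ->].
    by exists (mirror t_gt0 h a); rewrite ?fE.
  by exists (mirror t_gt0 h a); rewrite ?inE // fE mirrorhK.
have [h0|h_gt0] := posnP h.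
  exists (~~ b); split; first by [].
  by apply: eq_edge_image => a; rewrite /= h0 theta_map_flip.
exists b; split; first by []; apply: (edge_image_aut (theta_map d_gt0 u i b) mirrorhK).
apply: theta_adj_mirror => //; apply: chord_adj_mirror_single; first by rewrite h_gt0.
apply: (@chords_at_hub u i b h lt_td h_gt0 chords_range) => a a' neq_aa' tadj_aa'.
by rewrite -!fE; apply: f_adj.
Qed.

Lemma edge_image_symmetric l (u : 'I_s) i b :
  theta_chords t l chords -> theta_symmetric t l chords ->
  edge_image (@theta_adj t chords) (theta_map d_gt0 u i b) =
  edge_image (@theta_adj t chords) (theta_map d_gt0 u i true).
Proof.
move=> chords_ok /(theta_symmetric_mirror chords_ok) chords_sym.
case: b; first by []; case: chords_ok => _ [_ /allP chords_range].
rewrite -(edge_image_aut (theta_map d_gt0 u i true) (mirrorK t_gt0 t_gt0)).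
  by apply: eq_edge_image => a; exact: (theta_map_flip u i true a).
exact/theta_adj_mirror/chord_adj_mirror0.
Qed.

Definition theta_copies (bs : {set bool}) (u : 'I_s) (i : 'I_d) :=
  [set (hub_path t d_gt0 u i, edge_image (@theta_adj t chords) (theta_map d_gt0 u i b)) | b in bs].

Lemma card_theta_copies bs u i : #|theta_copies bs u i| <= #|bs|.
Proof. exact: leq_imset_card. Qed.

End ThetaCopies.

Lemma card_bigcup_le (I T : finType) (P : pred I) (A : I -> {set T}) :
  #|\bigcup_(i | P i) A i| <= \sum_(i | P i) #|A i|.
Proof.
elim/big_rec2: _ => [|i B n _ le_Bn]; first by rewrite cards0.
by apply: leq_trans (leq_card_setU _ _) _; rewrite leq_add2l.
Qed.

Lemma subgraph_edge_sub (T : finType) (adj : rel T) U F e :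
  is_subgraph adj U F -> (e \in F) <= (e \subset U).
Proof. by move/forallP/(_ e); case: (e \in F) => //= /andP [_ ->]. Qed.

Lemma card_bigcup2_le (I J T : finType) (P : I -> {set J}) (C : I -> J -> {set T}) m :
  (forall i j, #|C i j| <= m) -> #|\bigcup_i \bigcup_(j in P i) C i j| <= (\sum_i #|P i|) * m.
Proof.
move=> card_C; apply: leq_trans (card_bigcup_le _ _) _; rewrite big_distrl /=.
apply: leq_sum => i _; apply: leq_trans (card_bigcup_le _ _) _.
by rewrite -sum_nat_const; apply: leq_sum.
Qed.

Definition one_hub_thetas s d t (chords : seq nat) (e1 e2 e3 : {set wheel_vertex s d}) :=
  [set p : {set wheel_vertex s d} * {set {set wheel_vertex s d}} |
    [&& is_subgraph (@wheel_adj s d) p.1 p.2, iso_to (@theta_adj t chords) p.1 p.2,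
        2 <= (e1 \in p.2) + (e2 \in p.2) + (e3 \in p.2) & #|[set x in p.1 | is_hub x]| == 1]].

Definition orientations (sym : bool) : {set bool} := if sym then [set true] else setT.

Lemma one_hub_thetas_sub s d t l (chords : seq nat) (d_gt0 : 0 < d) (t_gt0 : 0 < t)
    (e1 e2 e3 : {set wheel_vertex s d}) :
  t < d -> theta_chords t l chords ->
  one_hub_thetas t chords e1 e2 e3 \subset
  \bigcup_u \bigcup_(i in placements t d_gt0 e1 e2 e3 u)
    theta_copies t chords d_gt0 (orientations (theta_symmetric t l chords)) u i.
Proof.
move=> lt_td chords_ok; apply/subsetP => -[U F].
rewrite inE /= => /and4P [sub iso two_edges one_hub].
have [u [i [b [U_eq F_eq]]]] := theta_copy_one_hub d_gt0 t_gt0 lt_td chords_ok sub iso one_hub.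
apply/bigcupP; exists u => //; apply/bigcupP; exists i.
  rewrite inE -U_eq; apply: leq_trans two_edges _.
  by apply: leq_add; [apply: leq_add|]; apply: subgraph_edge_sub sub.
rewrite U_eq F_eq /theta_copies /orientations.
case: ifP => [sym|_]; last by apply: imset_f; rewrite inE.
rewrite (edge_image_symmetric d_gt0 t_gt0 u i b chords_ok sym).
by apply: imset_f; rewrite inE.
Qed.

Unset Implicit Arguments.

Theorem lemma2p2 (d s t l : nat) (chords : seq nat)
  (e1 e2 e3 : {set wheel_vertex s d}) :
  1 <= s -> 3 * t - 5 <= d -> 4 <= t -> l + 3 <= t ->
  theta_chords t l chords ->
  is_edge (@wheel_adj s d) e1 -> is_edge (@wheel_adj s d) e2 ->
  is_edge (@wheel_adj s d) e3 ->
  e1 != e2 -> e1 != e3 -> e2 != e3 ->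
  #|[set p : {set wheel_vertex s d} * {set {set wheel_vertex s d}} |
      [&& is_subgraph (@wheel_adj s d) p.1 p.2,
          iso_to (@theta_adj t chords) p.1 p.2,
          2 <= (e1 \in p.2) + (e2 \in p.2) + (e3 \in p.2) &
          #|[set x in p.1 | is_hub x]| == 1]]|
  <= (if theta_symmetric t l chords
      then maxn (s * (t - 2)) (t - 1)
      else maxn (2 * s * (t - 2)) (2 * (t - 1))).
Proof.
move=> _ d_ge t_ge4 _ chords_ok edge1 edge2 edge3 neq12 neq13 neq23.
have d_gt0 : 0 < d by lia.
have t_gt0 : 0 < t by lia.
have lt_td : t < d by lia.
apply: leq_trans (subset_leq_card (one_hub_thetas_sub d_gt0 t_gt0 e1 e2 e3 lt_td chords_ok)) _.
apply: leq_trans (card_bigcup2_le _ (card_theta_copies t chords d_gt0 _)) _.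
apply: leq_trans (leq_mul (sum_card_placements d_gt0 t_ge4 d_ge edge1 edge2 edge3
  neq12 neq13 neq23) (leqnn _)) _.
by rewrite /orientations; case: ifP => _; rewrite ?cards1 ?cardsT ?card_bool; nia.
Qed.
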